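(* Let $Q$ be an automorphic loop and let $J:Q\to Q$, $x\mapsto x^{-1}$, be the inversion map. Then $J$ lies in $N_{\mathrm{Sym}(Q)}(\mathrm{Mlt}(Q))\cap C_{\mathrm{Sym}(Q)}(\mathrm{Inn}(Q))$, i.e. $J$ normalizes $\mathrm{Mlt}(Q)$ and centralizes $\mathrm{Inn}(Q)$ in the symmetric group on $Q$.
   Context: A loop is a set with a binary operation in which left and right division are uniquely solvable and which has a neutral element $1$. $R_a:x\mapsto xa$, $L_a:x\mapsto ax$; $\mathrm{Mlt}(Q)=\langle R_x,L_x\mid x\in Q\rangle$; $\mathrm{Inn}(Q)$ is the stabilizer of $1$ in $\mathrm{Mlt}(Q)$. $Q$ is automorphic if $\mathrm{Inn}(Q)\le\mathrm{Aut}(Q)$. Automorphic loops are power-associative, so every element $x$ has a two-sided inverse $x^{-1}$. *)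

From Stdlib Require Import ssreflect ssrfun.

(* A loop, in the equational (quasigroup-with-identity) presentation:
   left/right division are uniquely solvable, witnessed by the operations
   ldiv (x \ y = the unique z with x*z = y) and rdiv (y / x = the unique z
   with z*x = y). *)
Record loop := Loop {
  carrier :> Type;
  mul : carrier -> carrier -> carrier;
  one : carrier;
  ldiv : carrier -> carrier -> carrier;
  rdiv : carrier -> carrier -> carrier;
  mulKl : forall x y, ldiv x (mul x y) = y;
  mulKVl : forall x y, mul x (ldiv x y) = y;
  mulKr : forall x y, rdiv (mul y x) x = y;
  mulKVr : forall x y, mul (rdiv y x) x = y;
  mul1x : forall x, mul one x = x;
  mulx1 : forall x, mul x one = x
}.

Section LoopDefs.
Variable Q : loop.

Definition Rt (a : Q) : Q -> Q := fun x => mul Q x a.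
Definition Lt (a : Q) : Q -> Q := fun x => mul Q a x.
Definition Rinv (a : Q) : Q -> Q := fun x => rdiv Q x a.
Definition Linv (a : Q) : Q -> Q := fun x => ldiv Q a x.

Inductive mlt_word : (Q -> Q) -> Prop :=
| mw_id : mlt_word id
| mw_R a f : mlt_word f -> mlt_word (Rt a \o f)
| mw_Rinv a f : mlt_word f -> mlt_word (Rinv a \o f)
| mw_L a f : mlt_word f -> mlt_word (Lt a \o f)
| mw_Linv a f : mlt_word f -> mlt_word (Linv a \o f).

Definition Mlt (f : Q -> Q) : Prop :=
  exists g, mlt_word g /\ forall x, f x = g x.

Definition Inn (f : Q -> Q) : Prop := Mlt f /\ f (one Q) = one Q.

Definition is_aut (f : Q -> Q) : Prop :=
  bijective f /\ forall x y, f (mul Q x y) = mul Q (f x) (f y).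

Definition automorphic : Prop := forall f, Inn f -> is_aut f.

(* inversion map x |-> x^{-1}; we take the right inverse x \ 1, which in an
   automorphic loop is the two-sided inverse *)
Definition Jinv (x : Q) : Q := ldiv Q x (one Q).

End LoopDefs.

(* Write J x = x\1 and use the inner maps T_x = L_x^-1 R_x and
   L_{y,x} = L_{xy}^-1 L_x L_y, which are automorphisms.  From T_x x = x
   one gets T_x y = (x\y) x; at y = 1 this makes J x a two-sided inverse,
   and T_x (x y) = x T_x y gives flexibility, so L_{y,x} fixes x.  Since
   automorphisms commute with J, evaluating L_{y,x} at J x = y (y\J x)
   yields J x = J ((xy)\x) * J (xy), which is the antiautomorphic inverse
   property J (b a) = J a * J b.  The latter turns J-conjugates of the
   generators R_a, L_a of Mlt(Q) into L_{J a}, R_{J a}, so J normalizes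
   Mlt(Q); and J centralizes Inn(Q) because inner maps are automorphisms. *)
From Stdlib Require Import ssreflect ssrfun.

Set Implicit Arguments.
Unset Strict Implicit.

Section Loop.

Variable Q : loop.

Local Notation "x * y" := (mul Q x y).
Local Notation "x \ y" := (ldiv Q x y) (at level 40, left associativity).
Local Notation J := (Jinv Q).

Definition inner_T (x : Q) : Q -> Q := fun y => x \ (y * x).

Definition inner_L (y x : Q) : Q -> Q := fun z => (x * y) \ (x * (y * z)).

Lemma ldivv (x : Q) : x \ x = one Q.
Proof. by rewrite -{2}(mulx1 Q x) mulKl. Qed.

Lemma mulJ (x : Q) : x * J x = one Q.
Proof. exact: mulKVl. Qed.

Lemma Inn_inner_T (x : Q) : Inn Q (inner_T x).
Proof.
split; last by rewrite /inner_T mul1x ldivv.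
exists (Linv Q x \o (Rt Q x \o id)); split=> //.
by apply: mw_Linv; apply: mw_R; apply: mw_id.
Qed.

Lemma Inn_inner_L (y x : Q) : Inn Q (inner_L y x).
Proof.
split; last by rewrite /inner_L mulx1 ldivv.
exists (Linv Q (x * y) \o (Lt Q x \o (Lt Q y \o id))); split=> //.
by apply: mw_Linv; apply: mw_L; apply: mw_L; apply: mw_id.
Qed.

Section Morphism.

Variable f : Q -> Q.
Hypothesis fM : forall x y, f (x * y) = f x * f y.

Lemma morph_one : f (one Q) = one Q.
Proof.
have f11 : f (one Q) * f (one Q) = one Q * f (one Q) by rewrite -fM mulx1 mul1x.
by rewrite -(mulKr Q (f (one Q)) (f (one Q))) f11 mulKr.
Qed.

Lemma morph_Jinv (x : Q) : f (J x) = J (f x).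
Proof.
have h : f x * f (J x) = one Q by rewrite -fM mulJ morph_one.
by rewrite [RHS]/Jinv -h mulKl.
Qed.

End Morphism.

Section Automorphic.

Hypothesis HA : automorphic Q.

Lemma inner_morph (f : Q -> Q) : Inn Q f -> forall x y, f (x * y) = f x * f y.
Proof. by move=> /HA[]. Qed.

Lemma inner_TM (x y z : Q) : inner_T x (y * z) = inner_T x y * inner_T x z.
Proof. exact: inner_morph (Inn_inner_T x) y z. Qed.

Lemma inner_LM (y x z w : Q) : inner_L y x (z * w) = inner_L y x z * inner_L y x w.
Proof. exact: inner_morph (Inn_inner_L y x) z w. Qed.

Lemma inner_T_id (x : Q) : inner_T x x = x.
Proof. exact: mulKl. Qed.

Lemma inner_TE (x y : Q) : inner_T x y = (x \ y) * x.
Proof. by rewrite -{1}(mulKVl Q x y) inner_TM inner_T_id mulKVl. Qed.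

Lemma mulVJ (x : Q) : J x * x = one Q.
Proof. by rewrite -inner_TE /inner_T mul1x ldivv. Qed.

Lemma JinvK : involutive J.
Proof. by move=> x; rewrite {1}/Jinv -(mulVJ x) mulKl. Qed.

Lemma flexible (x y : Q) : (x * y) * x = x * (y * x).
Proof.
have Txy : inner_T x (x * y) = y * x by rewrite inner_TM inner_T_id mulKVl.
by rewrite -Txy mulKVl.
Qed.

Lemma inner_L_fix (y x : Q) : inner_L y x x = x.
Proof. by rewrite /inner_L -flexible mulKl. Qed.

Lemma Jinv_ldiv_mul (x y : Q) : J x = J ((x * y) \ x) * J (x * y).
Proof.
pose L := inner_L y x.
have LM := inner_LM y x.
have Ly : L y = J ((x * y) \ x).
  by rewrite -(JinvK (L y)) -(morph_Jinv LM) /L /inner_L mulJ mulx1.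
have LyJx : L (y \ J x) = J (x * y).
  by rewrite /L /inner_L mulKVl mulJ.
by rewrite -Ly -LyJx -LM mulKVl -{1}(inner_L_fix y x) (morph_Jinv LM).
Qed.

Lemma Jinv_mul (x y : Q) : J (x * y) = J y * J x.
Proof.
have := Jinv_ldiv_mul (x * y) ((x * y) \ x).
by rewrite mulKVl mulKl.
Qed.

Lemma mlt_word_conj_Jinv (g : Q -> Q) :
  mlt_word Q g -> exists2 g', mlt_word Q g' & forall z, J (g (J z)) = g' z.
Proof.
elim=> {g} [|a f _ [g' w E]|a f _ [g' w E]|a f _ [g' w E]|a f _ [g' w E]].
- by exists id; [apply: mw_id | move=> z; rewrite JinvK].
- exists (Lt Q (J a) \o g'); first exact: mw_L.
  by move=> z; rewrite /= /Rt /Lt Jinv_mul E.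
- exists (Linv Q (J a) \o g'); first exact: mw_Linv.
  by move=> z; rewrite /= /Rinv /Linv -E -{2}(mulKVr Q a (f (J z))) Jinv_mul mulKl.
- exists (Rt Q (J a) \o g'); first exact: mw_R.
  by move=> z; rewrite /= /Rt /Lt Jinv_mul E.
- exists (Rinv Q (J a) \o g'); first exact: mw_Rinv.
  by move=> z; rewrite /= /Rinv /Linv -E -{2}(mulKVl Q a (f (J z))) Jinv_mul mulKr.
Qed.

Lemma Mlt_conj_Jinv (f : Q -> Q) : Mlt Q f -> Mlt Q (J \o f \o J).
Proof.
move=> [g [w E]]; have [g' w' E'] := mlt_word_conj_Jinv w.
by exists g'; split=> // z; rewrite /= E E'.
Qed.

End Automorphic.

End Loop.

Theorem corollary2p2 (Q : loop) (HA : automorphic Q) :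
  let J := Jinv Q in
  (* J is a two-sided inverse map, and J is an element of Sym(Q) *)
  (forall x : Q, mul Q x (J x) = one Q /\ mul Q (J x) x = one Q) /\
  (exists J' : Q -> Q,
     cancel J J' /\ cancel J' J /\
     (* J normalizes Mlt(Q): J Mlt J^-1 = Mlt *)
     (forall f, Mlt Q f -> Mlt Q (J \o f \o J')) /\
     (forall f, Mlt Q f -> Mlt Q (J' \o f \o J))) /\
  (* J centralizes Inn(Q) *)
  (forall f, Inn Q f -> forall x, J (f x) = f (J x)).
Proof.
move=> J; split; [|split].
- by move=> x; split; [apply: mulJ | apply: mulVJ].
- exists J; do 2![split; first exact: JinvK].
  by split; apply: Mlt_conj_Jinv.
- by move=> f Hf x; rewrite (morph_Jinv (inner_morph HA Hf)).
Qed.
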